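(* Under the standing assumptions below, the closure $\overline{\mathcal P_1}$ is a perfect set; consequently $\overline{\mathcal P_1}$ is uncountable and $\overline{\mathcal P_1}\setminus\mathcal P_1$ is uncountable.
   Context: Fix $\rho_1,\rho_2,\rho_3\in(0,1)$ with $\rho_1+\rho_2+\rho_3>1$ and $\rho_i+\rho_j\le1$ for all $i\ne j$; $\mu_i=1$, $\theta:=\rho_1+\rho_2+\rho_3-1$. $A_i^0:=\{y\in\mathbb R^3: y_1+y_2+y_3=1, y_i=0, y_l\ge0\}$, $A^0:=\bigcup_iA_i^0$; for $z\in A^0\setminus A_j^0$, $f_j(z):=\sum_{i\neq j}\frac{(1-\rho_j)z_i+\rho_i z_j}{(1-\rho_j)+\theta z_j}e_i$. For $(\hat i,\hat j,\hat k)$ equal to $(1,2,3)$ or a cyclic permutation, $(1-x)e_{\hat j}+xe_{\hat k}\in A^0_{\hat i}$ is written $(x,\hat i)$. Decision points $d_1,d_2,d_3\in(0,1)$ (identified with $(d_{\hat i},\hat i)$); switching rule $\mathfrak R((x,\hat i))=\hat j$ if $x<d_{\hat i}$, $\hat k$ if $x>d_{\hat i}$, both allowed if $x=d_{\hat i}$; $\varphi(z):=f_{\mathfrak R(z)}(z)$. A trajectory is $(z(t))$ with $z(t+1)\in\varphi(z(t))$; $z$ is a pre-image of $z'$ if some trajectory from $z$ has $z(t)=z'$ for some $t\ge1$. Standing assumption: $d_1$ has infinitely many distinct pre-images, while $d_2$ and $d_3$ have only finitely many. $\mathcal P_1$ is the set consisting of $d_1$ and all its pre-images; closure is with respect to the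 Euclidean topology on $A^0$. *)

From Stdlib Require Import Reals Lra.
Open Scope R_scope.

Inductive idx := i1 | i2 | i3.

Definition idx_eqb (a b : idx) : bool :=
  match a, b with
  | i1, i1 | i2, i2 | i3, i3 => true
  | _, _ => false
  end.

Definition nxt (i : idx) : idx :=
  match i with i1 => i2 | i2 => i3 | i3 => i1 end.

Definition pt := idx -> R.

Definition theta (rho : idx -> R) : R := rho i1 + rho i2 + rho i3 - 1.

Definition inA0i (i : idx) (y : pt) : Prop :=
  y i1 + y i2 + y i3 = 1 /\ y i = 0 /\ 0 <= y i1 /\ 0 <= y i2 /\ 0 <= y i3.
Definition inA0 (y : pt) : Prop := exists i, inA0i i y.

Definition f (rho : idx -> R) (j : idx) (z : pt) : pt :=
  fun i => if idx_eqb i j then 0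
           else ((1 - rho j) * z i + rho i * z j) / ((1 - rho j) + theta rho * z j).

(* (x, ihat) := (1-x) e_jhat + x e_khat, with (ihat,jhat,khat) cyclic *)
Definition xpt (x : R) (ih : idx) : pt :=
  fun l => if idx_eqb l (nxt ih) then 1 - x
           else if idx_eqb l (nxt (nxt ih)) then x else 0.

(* z' in phi(z) = f_{R(z)}(z), the switching rule R given by decision points d *)
Definition step (rho d : idx -> R) (z z' : pt) : Prop :=
  exists (ih : idx) (x : R), 0 <= x <= 1 /\ z = xpt x ih /\
    ((x <= d ih /\ z' = f rho (nxt ih) z) \/
     (d ih <= x /\ z' = f rho (nxt (nxt ih)) z)).

Definition trajectory (rho d : idx -> R) (zs : nat -> pt) : Prop :=
  forall t, step rho d (zs t) (zs (S t)).

Definition preimage (rho d : idx -> R) (z z' : pt) : Prop :=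
  exists zs : nat -> pt, trajectory rho d zs /\ zs O = z /\
    exists t : nat, (1 <= t)%nat /\ zs t = z'.

Definition dpt (d : idx -> R) (i : idx) : pt := xpt (d i) i.

Definition P1 (rho d : idx -> R) (z : pt) : Prop :=
  z = dpt d i1 \/ preimage rho d z (dpt d i1).

Definition finite_set (S : pt -> Prop) : Prop :=
  exists l : list pt, forall z, S z -> List.In z l.
Definition infinite_set (S : pt -> Prop) : Prop := ~ finite_set S.

Definition countable_set (S : pt -> Prop) : Prop :=
  exists g : pt -> nat, forall x y, S x -> S y -> g x = g y -> x = y.
Definition uncountable_set (S : pt -> Prop) : Prop := ~ countable_set S.

Definition dist3 (y z : pt) : R :=
  sqrt ((y i1 - z i1)^2 + (y i2 - z i2)^2 + (y i3 - z i3)^2).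

Definition adherent (S : pt -> Prop) (z : pt) : Prop :=
  forall eps, 0 < eps -> exists p, S p /\ dist3 z p < eps.

Definition closureA0 (S : pt -> Prop) (z : pt) : Prop :=
  inA0 z /\ adherent S z.

Definition closedA0 (S : pt -> Prop) : Prop :=
  forall z, inA0 z -> adherent S z -> S z.

Definition perfectA0 (S : pt -> Prop) : Prop :=
  closedA0 S /\
  forall z, S z -> forall eps, 0 < eps -> exists p, S p /\ p <> z /\ dist3 z p < eps.

From Stdlib Require Import Reals Lra Lia List ClassicalEpsilon FunctionalExtensionality
  Ranalysis5 Classical ZArith.
Open Scope R_scope.

(* The pre-images of [d_1] form one backward orbit [d_1 = y_0 <- y_1 <- y_2 <- ...]: in edge
   coordinates both branches of [phi] are strictly decreasing and they meet only at a common
   vertex, so a point has at most one pre-image; since [d_1] has infinitely many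
   pre-images, the orbit is infinite and injective.  The branches are also continuous and, because [rho_i + rho_j <= 1],
   non-expanding.  By pigeonhole, two orbit points lie close together on one edge with no
   pre-image of [d_2], [d_3] between them; pushing this pair forward, the segment between
   them stays short and can straddle no decision point but [d_1], so either it straddles
   [d_1] or it ends at [y_0 = d_1].  Either way [d_1] is a limit of the [y_t], and by the
   intermediate value theorem this pulls back along the orbit: every [y_k] is a limit of
   other [y_t].  A nonempty perfect closed subset
   of [A^0] is uncountable by a nested-ball argument, and removing the countable set [P_1]
   keeps it uncountable. *)

(** * The Euclidean topology of [A^0] *)

Lemma dist3_refl z : dist3 z z = 0.
Proof.
  unfold dist3. replace ((z i1 - z i1) ^ 2 + (z i2 - z i2) ^ 2 + (z i3 - z i3) ^ 2) with 0
    by ring.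
  exact sqrt_0.
Qed.

Lemma dist3_sym y z : dist3 y z = dist3 z y.
Proof. unfold dist3. f_equal. ring. Qed.

Lemma Rabs_coord_le_dist3 y z i : Rabs (y i - z i) <= dist3 y z.
Proof.
  unfold dist3. rewrite <- sqrt_Rsqr_abs. apply sqrt_le_1_alt. unfold Rsqr.
  pose proof (pow2_ge_0 (y i1 - z i1)). pose proof (pow2_ge_0 (y i2 - z i2)).
  pose proof (pow2_ge_0 (y i3 - z i3)). destruct i; simpl in *; lra.
Qed.

Lemma dist3_pos y z : y <> z -> 0 < dist3 y z.
Proof.
  intros Hyz. destruct (classic (forall i, y i = z i)) as [Heq|Hne].
  - exfalso. apply Hyz, functional_extensionality, Heq.
  - apply not_all_ex_not in Hne as [i Hi].
    pose proof (Rabs_pos_lt (y i - z i) ltac:(lra)). pose proof (Rabs_coord_le_dist3 y z i).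
    lra.
Qed.

Lemma dist3_le_coord y z r : (forall i, Rabs (y i - z i) <= r) -> dist3 y z <= 2 * r.
Proof.
  intros H. assert (Hsq : forall i, (y i - z i) ^ 2 <= r * r).
  { intro i. specialize (H i). pose proof (Rabs_pos (y i - z i)).
    rewrite <- pow2_abs. nra. }
  pose proof (Rabs_pos (y i1 - z i1)). pose proof (H i1).
  unfold dist3. rewrite <- (sqrt_square (2 * r)) by lra. apply sqrt_le_1_alt.
  pose proof (Hsq i1). pose proof (Hsq i2). pose proof (Hsq i3). nra.
Qed.

Lemma sum_sq3_nonneg a b c : 0 <= a ^ 2 + b ^ 2 + c ^ 2.
Proof. pose proof (pow2_ge_0 a). pose proof (pow2_ge_0 b). pose proof (pow2_ge_0 c). lra. Qed.

Lemma cauchy_schwarz3 a1 a2 a3 b1 b2 b3 :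
  a1 * b1 + a2 * b2 + a3 * b3 <=
  sqrt (a1 ^ 2 + a2 ^ 2 + a3 ^ 2) * sqrt (b1 ^ 2 + b2 ^ 2 + b3 ^ 2).
Proof.
  set (s := a1 * b1 + a2 * b2 + a3 * b3).
  destruct (Rle_dec s 0).
  { pose proof (sqrt_pos (a1 ^ 2 + a2 ^ 2 + a3 ^ 2)).
    pose proof (sqrt_pos (b1 ^ 2 + b2 ^ 2 + b3 ^ 2)). nra. }
  rewrite <- sqrt_mult by apply sum_sq3_nonneg.
  rewrite <- (sqrt_square s) by lra. apply sqrt_le_1_alt. unfold s.
  (* Lagrange's identity *)
  pose proof (pow2_ge_0 (a1 * b2 - a2 * b1)). pose proof (pow2_ge_0 (a1 * b3 - a3 * b1)).
  pose proof (pow2_ge_0 (a2 * b3 - a3 * b2)). nra.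
Qed.

Lemma dist3_triangle x y z : dist3 x z <= dist3 x y + dist3 y z.
Proof.
  unfold dist3.
  set (A := (x i1 - y i1) ^ 2 + (x i2 - y i2) ^ 2 + (x i3 - y i3) ^ 2).
  set (B := (y i1 - z i1) ^ 2 + (y i2 - z i2) ^ 2 + (y i3 - z i3) ^ 2).
  pose proof (cauchy_schwarz3 (x i1 - y i1) (x i2 - y i2) (x i3 - y i3)
    (y i1 - z i1) (y i2 - z i2) (y i3 - z i3)) as Hcs. fold A B in Hcs.
  assert (HA : 0 <= A) by apply sum_sq3_nonneg. assert (HB : 0 <= B) by apply sum_sq3_nonneg.
  pose proof (sqrt_pos A). pose proof (sqrt_pos B).
  rewrite <- (sqrt_square (sqrt A + sqrt B)) by lra. apply sqrt_le_1_alt.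
  pose proof (sqrt_sqrt A HA). pose proof (sqrt_sqrt B HB). unfold A, B in *. nra.
Qed.

Lemma adherent_coords S z eps : adherent S z -> 0 < eps ->
  exists p, S p /\ forall i, - eps < p i - z i < eps.
Proof.
  intros Hz Heps. destruct (Hz eps Heps) as (p & Hp & Hd). exists p. split; [exact Hp|].
  intro i. pose proof (Rabs_coord_le_dist3 z p i).
  destruct (Rabs_def2 (p i - z i) eps) as [H1 H2]; [rewrite Rabs_minus_sym; lra|lra].
Qed.

Lemma inA0_closed z : adherent inA0 z -> inA0 z.
Proof.
  intros Hz.
  assert (Hnn : forall i, 0 <= z i).
  { intro i. apply Rnot_lt_le. intro Hneg.
    destruct (adherent_coords _ _ (- z i) Hz ltac:(lra)) as (p & [j Hp] & Hpz).
    specialize (Hpz i). unfold inA0i in Hp. destruct i; lra. }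
  assert (Hsum : z i1 + z i2 + z i3 = 1).
  { destruct (Req_dec (z i1 + z i2 + z i3) 1) as [|Hne]; [assumption|exfalso].
    set (e := Rabs (z i1 + z i2 + z i3 - 1)).
    assert (He : 0 < e) by (apply Rabs_pos_lt; lra).
    destruct (adherent_coords _ _ (e / 3) Hz ltac:(lra)) as (p & [j Hp] & Hpz).
    pose proof (Hpz i1). pose proof (Hpz i2). pose proof (Hpz i3). unfold inA0i in Hp.
    unfold e in *. destruct (Rcase_abs (z i1 + z i2 + z i3 - 1));
      [rewrite Rabs_left in * by lra | rewrite Rabs_right in * by lra]; lra. }
  destruct (classic (exists j, z j = 0)) as [[j Hj]|Hpos].
  - exists j. unfold inA0i. repeat split; auto.
  - exfalso.
    assert (Hpos' : forall j, 0 < z j).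
    { intro j. destruct (Hnn j); [assumption|]. exfalso. apply Hpos. eauto. }
    set (m := Rmin (z i1) (Rmin (z i2) (z i3))).
    assert (Hm : 0 < m) by (apply Rmin_glb_lt; [|apply Rmin_glb_lt]; apply Hpos').
    assert (Hmj : forall j, m <= z j).
    { unfold m. intros []; [apply Rmin_l| |].
      - eapply Rle_trans; [apply Rmin_r|apply Rmin_l].
      - eapply Rle_trans; [apply Rmin_r|apply Rmin_r]. }
    destruct (adherent_coords _ _ m Hz Hm) as (p & [j Hp] & Hpz).
    specialize (Hpz j). specialize (Hmj j). destruct Hp as (_ & Hpj & _). lra.
Qed.

Lemma closureA0_incl S z : inA0 z -> S z -> closureA0 S z.
Proof. intros HA Hz. split; [exact HA|]. intros eps Heps. exists z. rewrite dist3_refl. auto. Qed.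

Lemma closureA0_closed S : closedA0 (closureA0 S).
Proof.
  intros z HA Hz. split; [exact HA|]. intros eps Heps.
  destruct (Hz (eps / 2) ltac:(lra)) as (w & [_ Hw] & Hzw).
  destruct (Hw (eps / 2) ltac:(lra)) as (p & Hp & Hwp).
  exists p. split; [exact Hp|]. pose proof (dist3_triangle z w p). lra.
Qed.

Lemma closureA0_no_isolated S : (forall z, S z -> inA0 z) ->
  (forall z, S z -> forall eps, 0 < eps -> exists p, S p /\ p <> z /\ dist3 z p < eps) ->
  forall z, closureA0 S z ->
  forall eps, 0 < eps -> exists p, closureA0 S p /\ p <> z /\ dist3 z p < eps.
Proof.
  intros HA Hiso z [Hz Hadh] eps Heps. destruct (classic (S z)) as [HSz|HSz].
  - destruct (Hiso z HSz eps Heps) as (p & Hp & Hpz & Hd).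
    exists p. auto using closureA0_incl.
  - destruct (Hadh eps Heps) as (p & Hp & Hd). exists p.
    split; [auto using closureA0_incl|]. split; [intros ->; contradiction|exact Hd].
Qed.

(** * Perfect subsets of [A^0] are uncountable *)

Section PerfectSetsUncountable.

Variable F : pt -> Prop.
Hypothesis F_closed : closedA0 F.
Hypothesis F_sub_A0 : forall z, F z -> inA0 z.
Hypothesis F_no_isolated :
  forall z, F z -> forall eps, 0 < eps -> exists p, F p /\ p <> z /\ dist3 z p < eps.
Variable code : pt -> nat.
Hypothesis code_inj : forall x y, F x -> F y -> code x = code y -> x = y.

Definition refines (n : nat) (b b' : pt * R) : Prop :=
  F (fst b') /\ 0 < snd b' /\ snd b' <= snd b / 4 /\ dist3 (fst b) (fst b') <= snd b / 4 /\
  forall z, F z -> dist3 (fst b') z <= snd b' -> code z <> n.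

Lemma refines_exists n b : F (fst b) -> 0 < snd b -> exists b', refines n b b'.
Proof.
  destruct b as [c r]; simpl. intros Hc Hr.
  destruct (classic (exists e, F e /\ code e = n)) as [(e & He & Hcode)|Hnone].
  - assert (Hc' : exists c', F c' /\ c' <> e /\ dist3 c c' <= r / 4).
    { destruct (classic (c = e)) as [<-|Hce].
      - destruct (F_no_isolated c Hc (r / 4) ltac:(lra)) as (p & Hp & Hpc & Hd).
        exists p. repeat split; auto; lra.
      - exists c. rewrite dist3_refl. repeat split; auto; lra. }
    destruct Hc' as (c' & Hc' & Hc'e & Hd).
    pose proof (dist3_pos _ _ Hc'e).
    set (r' := Rmin (r / 4) (dist3 c' e / 2)).
    assert (r' <= r / 4) by apply Rmin_l. assert (r' <= dist3 c' e / 2) by apply Rmin_r.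
    exists (c', r'). unfold refines; simpl. repeat split; auto.
    + apply Rmin_glb_lt; lra.
    + intros z Hz Hdz Hcz. rewrite <- Hcode in Hcz.
      rewrite (code_inj z e Hz He Hcz) in Hdz. lra.
  - exists (c, r / 4). unfold refines; simpl. rewrite dist3_refl. repeat split; auto; try lra.
    intros z Hz _ Hcz. apply Hnone. eauto.
Qed.

Variable z0 : pt.
Hypothesis F_z0 : F z0.

Fixpoint ball (n : nat) : pt * R :=
  match n with
  | O => (z0, 1)
  | S m => epsilon (inhabits (z0, 1)) (refines m (ball m))
  end.

Definition center n := fst (ball n).
Definition radius n := snd (ball n).

Lemma ball_refines n : refines n (ball n) (ball (S n)).
Proof.
  assert (Hinv : forall n, F (center n) /\ 0 < radius n).
  { intro m. induction m as [|m [Hc Hr]].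
    - unfold center, radius; simpl. split; [exact F_z0|lra].
    - pose proof (epsilon_spec (inhabits (z0, 1)) _ (refines_exists m _ Hc Hr)) as H.
      destruct H as (H1 & H2 & _). split; assumption. }
  destruct (Hinv n) as [Hc Hr].
  exact (epsilon_spec (inhabits (z0, 1)) _ (refines_exists n _ Hc Hr)).
Qed.

Lemma center_in_F n : F (center n).
Proof. destruct n; [exact F_z0|]. apply (ball_refines n). Qed.

Lemma radius_pos n : 0 < radius n.
Proof. destruct n; [unfold radius; simpl; lra|]. apply (ball_refines n). Qed.

Lemma radius_le_pow n : radius n <= (/ 4) ^ n.
Proof.
  induction n as [|n IH]; [unfold radius; simpl; lra|].
  destruct (ball_refines n) as (_ & _ & H & _). fold (radius n) (radius (S n)) in H.
  simpl. lra.
Qed.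

Lemma radius_small eps : 0 < eps -> exists N, forall n, (N <= n)%nat -> radius n < eps.
Proof.
  intros Heps. destruct (pow_lt_1_zero (/ 4) ltac:(rewrite Rabs_right; lra) eps Heps)
    as [N HN].
  exists N. intros n Hn. specialize (HN n Hn). pose proof (radius_le_pow n).
  rewrite Rabs_right in HN by (apply Rle_ge, pow_le; lra). lra.
Qed.

Lemma center_nested n k :
  dist3 (center n) (center (n + k)) + radius (n + k) / 3 <= radius n / 3.
Proof.
  induction k as [|k IH]; [rewrite Nat.add_0_r, dist3_refl; lra|].
  rewrite <- plus_n_Sm. destruct (ball_refines (n + k)) as (_ & _ & H1 & H2 & _).
  fold (center (n + k)) (center (S (n + k))) (radius (n + k)) (radius (S (n + k))) in *.
  pose proof (dist3_triangle (center n) (center (n + k)) (center (S (n + k)))). lra.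
Qed.

Lemma center_close n m : (n <= m)%nat -> dist3 (center n) (center m) <= radius n / 3.
Proof.
  intros Hnm. pose proof (center_nested n (m - n)). pose proof (radius_pos (n + (m - n))).
  replace (n + (m - n))%nat with m in * by lia. lra.
Qed.

Lemma center_cauchy i : Cauchy_crit (fun n => center n i).
Proof.
  intros eps Heps. destruct (radius_small eps Heps) as [N HN]. exists N. intros n m Hn Hm.
  unfold R_dist. pose proof (Rabs_coord_le_dist3 (center n) (center m) i).
  pose proof (center_close N n Hn). pose proof (center_close N m Hm).
  pose proof (dist3_triangle (center n) (center N) (center m)).
  rewrite (dist3_sym (center n) (center N)) in *. specialize (HN N (le_n N)). lra.
Qed.

Definition limit : pt := fun i => proj1_sig (R_complete _ (center_cauchy i)).

Lemma limit_close n : dist3 (center n) limit <= 2 * (radius n / 3).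
Proof.
  apply dist3_le_coord. intro i. unfold limit.
  destruct (R_complete _ (center_cauchy i)) as [l Hl]; simpl.
  apply Rnot_lt_le. intro Hfar.
  set (e := Rabs (center n i - l) - radius n / 3).
  destruct (Hl e ltac:(unfold e; lra)) as [N HN].
  specialize (HN (Nat.max N n) ltac:(lia)). unfold R_dist in HN.
  pose proof (Rabs_coord_le_dist3 (center n) (center (Nat.max N n)) i).
  pose proof (center_close n (Nat.max N n) ltac:(lia)).
  pose proof (Rabs_triang (center n i - center (Nat.max N n) i) (center (Nat.max N n) i - l)).
  replace (center n i - center (Nat.max N n) i + (center (Nat.max N n) i - l))
    with (center n i - l) in * by ring.
  unfold e in HN. lra.
Qed.

Lemma limit_in_F : F limit.
Proof.
  assert (Hadh : adherent F limit).
  { intros eps Heps. destruct (radius_small eps Heps) as [N HN]. exists (center N).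
    split; [apply center_in_F|]. rewrite dist3_sym. pose proof (limit_close N).
    specialize (HN N (le_n N)). pose proof (radius_pos N). lra. }
  apply F_closed; [|exact Hadh].
  apply inA0_closed. intros eps Heps. destruct (Hadh eps Heps) as (p & Hp & Hd).
  exists p. split; auto.
Qed.

Lemma code_limit_absurd : False.
Proof.
  destruct (ball_refines (code limit)) as (_ & _ & _ & _ & Hfree).
  apply (Hfree limit limit_in_F); [|reflexivity].
  pose proof (limit_close (S (code limit))). pose proof (radius_pos (S (code limit))).
  fold (center (S (code limit))) (radius (S (code limit))). lra.
Qed.

End PerfectSetsUncountable.

Lemma perfect_uncountable (S : pt -> Prop) :
  closedA0 S -> (forall z, S z -> inA0 z) ->
  (forall z, S z -> forall eps, 0 < eps -> exists p, S p /\ p <> z /\ dist3 z p < eps) ->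
  (exists z, S z) -> uncountable_set S.
Proof.
  intros Hcl HA Hperf [z0 Hz0] [code Hcode].
  exact (code_limit_absurd S Hcl HA Hperf code Hcode z0 Hz0).
Qed.

Lemma uncountable_setminus (S T : pt -> Prop) :
  uncountable_set S -> (exists e : nat -> pt, forall z, T z -> exists k, z = e k) ->
  uncountable_set (fun z => S z /\ ~ T z).
Proof.
  intros HS [e HT] [code Hcode]. apply HS.
  exists (fun z => match excluded_middle_informative (exists k, z = e k) with
           | left H => (2 * proj1_sig (constructive_indefinite_description _ H))%nat
           | right _ => (2 * code z + 1)%nat end).
  intros a b Ha Hb.
  destruct (excluded_middle_informative (exists k, a = e k)) as [Ea|Ea];
  destruct (excluded_middle_informative (exists k, b = e k)) as [Eb|Eb].
  - destruct (constructive_indefinite_description _ Ea) as [ka ->].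
    destruct (constructive_indefinite_description _ Eb) as [kb ->]; simpl.
    intro Hk. f_equal. lia.
  - destruct (constructive_indefinite_description _ Ea); simpl. lia.
  - destruct (constructive_indefinite_description _ Eb); simpl. lia.
  - intro Hk. apply Hcode; try lia.
    + split; [exact Ha|]. intro Ta. apply Ea, HT, Ta.
    + split; [exact Hb|]. intro Tb. apply Eb, HT, Tb.
Qed.

(** * Intermediate values and pigeonhole *)

Definition between (a b c : R) : Prop := a < c < b \/ b < c < a.

Lemma between_sym a b c : between a b c -> between b a c.
Proof. unfold between. tauto. Qed.

Lemma between_dist a b c : between a b c -> Rabs (a - c) <= Rabs (a - b).
Proof.
  intros [H|H]; [rewrite !Rabs_left1 by lra|rewrite !Rabs_right by lra]; lra.
Qed.

Lemma ivt_decreasing (g : R -> R) a b c : a < b ->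
  (forall x, a <= x <= b -> continuity_pt g x) -> g b < c < g a ->
  exists c0, a < c0 < b /\ g c0 = c.
Proof.
  intros Hab Hcont Hc.
  destruct (IVT_interv (fun x => c - g x) a b) as (c0 & Hc0 & E); [|exact Hab|lra|lra|].
  - intros x Hx. apply continuity_pt_minus; [apply continuity_pt_const; intros ? ?; reflexivity|].
    apply Hcont, Hx.
  - assert (Eg : g c0 = c) by lra. exists c0. split; [|exact Eg].
    destruct (Req_dec c0 a) as [->|Ha]; [lra|]. destruct (Req_dec c0 b) as [->|Hb]; lra.
Qed.

Lemma between_preimage (g : R -> R) a b c :
  (forall x, 0 <= x <= 1 -> continuity_pt g x) ->
  (forall x x', 0 <= x -> x < x' -> x' <= 1 -> g x' < g x) ->
  0 <= a <= 1 -> 0 <= b <= 1 -> between (g a) (g b) c ->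
  exists c0, between a b c0 /\ g c0 = c.
Proof.
  intros Hcont Hdec Ha Hb Hc.
  destruct (Rtotal_order a b) as [Hab|[<-|Hab]].
  - pose proof (Hdec a b (proj1 Ha) Hab (proj2 Hb)).
    destruct (ivt_decreasing g a b c Hab) as (c0 & Hc0 & E);
      [intros x Hx; apply Hcont; lra|destruct Hc; lra|].
    exists c0. split; [left|]; assumption.
  - destruct Hc; lra.
  - pose proof (Hdec b a (proj1 Hb) Hab (proj2 Ha)).
    destruct (ivt_decreasing g b a c Hab) as (c0 & Hc0 & E);
      [intros x Hx; apply Hcont; lra|destruct Hc; lra|].
    exists c0. split; [right|]; assumption.
Qed.

Lemma pigeonhole {K : Type} (u : nat -> K) (l : list K) :
  (forall n, In (u n) l) -> exists a b, a <> b /\ u a = u b.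
Proof.
  intros Hl. apply NNPP. intro Hinj.
  assert (Hnd : NoDup (map u (seq 0 (S (length l))))).
  { apply NoDup_map_NoDup_ForallPairs; [|apply seq_NoDup].
    intros a b _ _ E. destruct (Nat.eq_dec a b); [assumption|exfalso; eauto]. }
  assert (Hincl : incl (map u (seq 0 (S (length l)))) l).
  { intros z (n & <- & _)%in_map_iff. apply Hl. }
  pose proof (NoDup_incl_length Hnd Hincl). rewrite length_map, length_seq in H. lia.
Qed.

Definition count_le (L : list R) (x : R) : nat :=
  length (filter (fun e => if Rle_dec e x then true else false) L).

Lemma count_le_mono L a b : a <= b -> (count_le L a <= count_le L b)%nat.
Proof.
  intros Hab. induction L as [|e L IH]; [constructor|]. unfold count_le in *; simpl.
  destruct (Rle_dec e a), (Rle_dec e b); simpl; lia || lra.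
Qed.

Lemma count_le_lt L a b e : In e L -> a < e <= b -> (count_le L a < count_le L b)%nat.
Proof.
  intros He Hab. induction L as [|e' L IH]; [contradiction|].
  pose proof (count_le_mono L a b ltac:(lra)). unfold count_le in *; simpl.
  destruct He as [->|He].
  - destruct (Rle_dec e a), (Rle_dec e b); simpl; lia || lra.
  - specialize (IH He). destruct (Rle_dec e' a), (Rle_dec e' b); simpl; lia || lra.
Qed.

Lemma same_bucket x y eps : 0 <= x -> 0 <= y -> 0 < eps ->
  Z.to_nat (up (x / eps)) = Z.to_nat (up (y / eps)) -> Rabs (x - y) < eps.
Proof.
  intros Hx Hy Heps E.
  destruct (archimed (x / eps)) as [Hx1 Hx2], (archimed (y / eps)) as [Hy1 Hy2].
  assert (0 <= x / eps) by (apply Rmult_le_pos; [|left; apply Rinv_0_lt_compat]; lra).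
  assert (0 <= y / eps) by (apply Rmult_le_pos; [|left; apply Rinv_0_lt_compat]; lra).
  assert (Hxp : (0 < up (x / eps))%Z) by (apply lt_IZR; lra).
  assert (Hyp : (0 < up (y / eps))%Z) by (apply lt_IZR; lra).
  assert (Eup : up (x / eps) = up (y / eps)) by lia. rewrite Eup in *.
  replace (x - y) with (eps * (x / eps - y / eps)) by (field; lra).
  rewrite Rabs_mult, (Rabs_right eps) by lra.
  assert (Rabs (x / eps - y / eps) < 1) by (apply Rabs_def1; lra). nra.
Qed.

(* Pigeonhole on the key (label, eps-bucket of u, number of points of B below u). *)
Lemma close_pair_avoiding {K : Type} (lab : nat -> K) (labs : list K) (u : nat -> R)
  (B : list R) eps :
  0 < eps -> (forall t, In (lab t) labs) -> (forall t, 0 <= u t <= 1) ->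
  (forall a b, lab a = lab b -> u a = u b -> a = b) ->
  exists a b, a <> b /\ lab a = lab b /\ Rabs (u a - u b) < eps /\
    forall e, In e B -> ~ between (u a) (u b) e.
Proof.
  intros Heps Hlab Hu Hinj.
  set (bucket x := Z.to_nat (up (x / eps))).
  set (N := bucket 1).
  assert (Hbucket : forall t, (bucket (u t) <= N)%nat).
  { intro t. unfold N, bucket. destruct (Hu t).
    assert (Hup : (up (u t / eps) <= up (1 / eps))%Z).
    { destruct (archimed (u t / eps)), (archimed (1 / eps)).
      assert (u t / eps <= 1 / eps) by (apply Rmult_le_compat_r; [left; apply Rinv_0_lt_compat|]; lra).
      apply Z.lt_succ_r, lt_IZR. rewrite succ_IZR. lra. }
    lia. }
  set (key t := (lab t, bucket (u t), count_le B (u t))).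
  destruct (pigeonhole key (list_prod (list_prod labs (seq 0 (S N))) (seq 0 (S (length B)))))
    as (a & b & Hab & E).
  { intro t. repeat apply in_prod; [apply Hlab| |]; apply in_seq; split; try lia.
    - specialize (Hbucket t). lia.
    - unfold count_le. pose proof (filter_length_le
        (fun e => if Rle_dec e (u t) then true else false) B). lia. }
  injection E as Elab Ebucket Ecount.
  assert (Hne : u a <> u b) by (intro Eu; exact (Hab (Hinj a b Elab Eu))).
  exists a, b. split; [exact Hab|]. split; [exact Elab|]. split.
  - apply same_bucket; [apply Hu|apply Hu|exact Heps|exact Ebucket].
  - intros e He [Hbet|Hbet].
    + pose proof (count_le_lt B (u a) (u b) e He ltac:(lra)). lia.
    + pose proof (count_le_lt B (u b) (u a) e He ltac:(lra)). lia.
Qed.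

(** * Edge coordinates and the branches of [phi] *)

Lemma nxt_inj i j : nxt i = nxt j -> i = j.
Proof. destruct i, j; simpl; congruence. Qed.

Lemma xpt_at_self x i : xpt x i i = 0.
Proof. destruct i; reflexivity. Qed.

Lemma xpt_at_nxt2 x i : xpt x i (nxt (nxt i)) = x.
Proof. destruct i; reflexivity. Qed.

Lemma xpt_inj x x' i i' :
  0 < x < 1 -> 0 <= x' <= 1 -> xpt x i = xpt x' i' -> i = i' /\ x = x'.
Proof.
  intros Hx Hx' E.
  assert (Hi : i = i').
  { pose proof (f_equal (fun z => z i') E) as Ei. simpl in Ei. rewrite xpt_at_self in Ei.
    destruct i, i'; auto; unfold xpt in Ei; simpl in Ei; lra. }
  subst i'. split; [reflexivity|].
  rewrite <- (xpt_at_nxt2 x i), <- (xpt_at_nxt2 x' i), E. reflexivity.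
Qed.

Lemma xpt_0_nxt i : xpt 0 (nxt i) = xpt 1 i.
Proof. apply functional_extensionality; intro l; destruct i, l; unfold xpt; simpl; lra. Qed.

Lemma xpt_inA0 x i : 0 <= x <= 1 -> inA0 (xpt x i).
Proof. intros Hx. exists i. destruct i; unfold inA0i, xpt; simpl; lra. Qed.

Lemma dist3_xpt x x' i : dist3 (xpt x i) (xpt x' i) <= 2 * Rabs (x - x').
Proof.
  apply dist3_le_coord. intro l.
  assert (Hflip : Rabs (1 - x - (1 - x')) = Rabs (x - x')).
  { rewrite <- Rabs_Ropp. f_equal. ring. }
  pose proof (Rabs_pos (x - x')).
  destruct i, l; unfold xpt; simpl; rewrite ?Hflip, ?Rminus_diag, ?Rabs_R0; lra.
Qed.

Definition mobius (th r a s : R) : R := r * s / (a + th * s).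

Section Mobius.

Variables th r a : R.
Hypothesis th_pos : 0 < th.
Hypothesis r_pos : 0 < r.
Hypothesis r_le_a : r <= a.

Lemma mobius_sub s s' : 0 <= s -> 0 <= s' ->
  mobius th r a s' - mobius th r a s = r * a * (s' - s) / ((a + th * s) * (a + th * s')).
Proof. intros. unfold mobius. field. split; nra. Qed.

Lemma mobius_lt s s' : 0 <= s -> s < s' -> mobius th r a s < mobius th r a s'.
Proof.
  intros Hs Hss'. cut (0 < mobius th r a s' - mobius th r a s); [lra|].
  rewrite mobius_sub by lra.
  assert (0 < a) by lra. assert (0 < s' - s) by lra.
  apply Rdiv_lt_0_compat; repeat apply Rmult_lt_0_compat; nra.
Qed.

Lemma mobius_sub_le s s' : 0 <= s <= s' -> mobius th r a s' - mobius th r a s <= s' - s.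
Proof.
  intros Hs. rewrite mobius_sub by lra.
  assert (0 <= th * s) by nra. assert (0 <= th * s') by nra.
  assert (Hden : a * a <= (a + th * s) * (a + th * s')) by nra.
  apply (Rmult_le_reg_r ((a + th * s) * (a + th * s'))); [nra|].
  unfold Rdiv. rewrite Rmult_assoc, Rinv_l by nra.
  assert (r * a <= a * a) by nra. assert (0 <= s' - s) by lra. nra.
Qed.

Lemma mobius_pos s : 0 < s -> 0 < mobius th r a s.
Proof. intros. unfold mobius. apply Rdiv_lt_0_compat; nra. Qed.

Lemma mobius_lt_1 s : 0 <= s <= 1 -> r < a + th -> mobius th r a s < 1.
Proof.
  intros Hs Hr. unfold mobius. apply (Rmult_lt_reg_r (a + th * s)); [nra|].
  unfold Rdiv. rewrite Rmult_assoc, Rinv_l by nra. nra.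
Qed.

Lemma mobius_continuous s : 0 <= s -> continuity_pt (mobius th r a) s.
Proof. intros. unfold mobius. reg. nra. Qed.

End Mobius.

Section Dynamics.

Variable rho : idx -> R.
Hypothesis rho_01 : forall i, 0 < rho i < 1.
Hypothesis rho_sum : rho i1 + rho i2 + rho i3 > 1.
Hypothesis rho12 : rho i1 + rho i2 <= 1.
Hypothesis rho23 : rho i2 + rho i3 <= 1.
Hypothesis rho13 : rho i1 + rho i3 <= 1.

Lemma theta_pos : 0 < theta rho.
Proof. unfold theta. lra. Qed.

Lemma theta_cyclic i : theta rho = rho i + rho (nxt i) + rho (nxt (nxt i)) - 1.
Proof. unfold theta. destruct i; simpl; lra. Qed.

Lemma rho_nxt_le i : rho i <= 1 - rho (nxt i).
Proof. destruct i; simpl; lra. Qed.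

Lemma rho_nxt2_le i : rho i <= 1 - rho (nxt (nxt i)).
Proof. destruct i; simpl; lra. Qed.

(* In the coordinate [x] of [xpt x i], [f_j] maps [A^0_i] to [A^0_j]: for [j = nxt i] it
   is [gL i], for [j = nxt (nxt i)] it is [gR i]. *)
Definition gL (i : idx) (x : R) : R :=
  mobius (theta rho) (rho i) (1 - rho (nxt i)) (1 - x).
Definition gR (i : idx) (x : R) : R :=
  1 - mobius (theta rho) (rho i) (1 - rho (nxt (nxt i))) x.

Lemma f_xpt_nxt i x : x <= 1 -> f rho (nxt i) (xpt x i) = xpt (gL i x) (nxt i).
Proof.
  intros Hx. pose proof theta_pos. pose proof (rho_01 (nxt i)).
  assert (0 < 1 - rho (nxt i) + theta rho * (1 - x)) by nra.
  apply functional_extensionality; intro l. unfold f, xpt, gL, mobius.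
  destruct i, l; simpl in *; unfold theta in *; try field; lra.
Qed.

Lemma f_xpt_nxt2 i x : 0 <= x ->
  f rho (nxt (nxt i)) (xpt x i) = xpt (gR i x) (nxt (nxt i)).
Proof.
  intros Hx. pose proof theta_pos. pose proof (rho_01 (nxt (nxt i))).
  assert (0 < 1 - rho (nxt (nxt i)) + theta rho * x) by nra.
  apply functional_extensionality; intro l. unfold f, xpt, gR, mobius.
  destruct i, l; simpl in *; unfold theta in *; try field; lra.
Qed.

Lemma gL_nxt_0 i : gL (nxt i) 0 = gR i 1.
Proof.
  unfold gL, gR, mobius.
  replace (1 - rho (nxt (nxt i)) + theta rho * (1 - 0)) with (rho i + rho (nxt i)).
  replace (1 - rho (nxt (nxt i)) + theta rho * 1) with (rho i + rho (nxt i)).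
  - pose proof (rho_01 i). pose proof (rho_01 (nxt i)). field. lra.
  - rewrite (theta_cyclic i). ring.
  - rewrite (theta_cyclic i). ring.
Qed.

Definition branch (b : bool) (i : idx) : R -> R := if b then gR i else gL i.
Definition branch_edge (b : bool) (i : idx) : idx := if b then nxt (nxt i) else nxt i.
Definition side (b : bool) (c x : R) : Prop := if b then c <= x else x <= c.

Lemma branch_lt b i x x' : 0 <= x -> x < x' -> x' <= 1 -> branch b i x' < branch b i x.
Proof.
  intros. pose proof theta_pos. pose proof (rho_01 i).
  destruct b; unfold branch, gL, gR.
  - pose proof (mobius_lt _ _ _ theta_pos (proj1 (rho_01 i)) (rho_nxt2_le i) x x'). lra.
  - apply (mobius_lt _ _ _ theta_pos (proj1 (rho_01 i)) (rho_nxt_le i)); lra.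
Qed.

Lemma branch_inj b i x x' : 0 <= x <= 1 -> 0 <= x' <= 1 ->
  branch b i x = branch b i x' -> x = x'.
Proof.
  intros Hx Hx' E. destruct (Rtotal_order x x') as [Hlt|[Heq|Hlt]]; [exfalso| |exfalso];
    auto; [pose proof (branch_lt b i x x') | pose proof (branch_lt b i x' x)]; lra.
Qed.

Lemma branch_sub_le b i x x' : 0 <= x <= x' -> x' <= 1 ->
  branch b i x - branch b i x' <= x' - x.
Proof.
  intros. destruct b; unfold branch, gL, gR.
  - pose proof (mobius_sub_le _ _ _ theta_pos (proj1 (rho_01 i)) (rho_nxt2_le i) x x'). lra.
  - pose proof (mobius_sub_le _ _ _ theta_pos (proj1 (rho_01 i)) (rho_nxt_le i)
      (1 - x') (1 - x)). lra.
Qed.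

Lemma branch_continuous b i x : 0 <= x <= 1 -> continuity_pt (branch b i) x.
Proof.
  intros Hx. destruct b; unfold branch, gL, gR.
  - apply continuity_pt_minus; [apply continuity_pt_const; intros ? ?; reflexivity|].
    apply mobius_continuous; [exact theta_pos|apply rho_01|apply rho_nxt2_le|lra].
  - apply (continuity_pt_comp (fun x => 1 - x) (mobius _ _ _)); [reg|].
    apply mobius_continuous; [exact theta_pos|apply rho_01|apply rho_nxt_le|lra].
Qed.

Lemma branch_interior b i c x : 0 < c < 1 -> 0 <= x <= 1 -> side b c x ->
  0 < branch b i x < 1.
Proof.
  intros Hc Hx Hside. pose proof (rho_01 i). pose proof (rho_01 (nxt i)).
  pose proof (rho_01 (nxt (nxt i))). pose proof (theta_cyclic i).
  destruct b; unfold side, branch, gL, gR in *.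
  - pose proof (mobius_pos _ _ _ theta_pos (proj1 (rho_01 i)) (rho_nxt2_le i) x) as Hpos.
    pose proof (mobius_lt_1 _ _ _ theta_pos (proj1 (rho_01 i)) (rho_nxt2_le i) x) as Hlt1.
    assert (mobius (theta rho) (rho i) (1 - rho (nxt (nxt i))) x < 1) by (apply Hlt1; lra).
    assert (0 < mobius (theta rho) (rho i) (1 - rho (nxt (nxt i))) x) by (apply Hpos; lra).
    lra.
  - pose proof (mobius_pos _ _ _ theta_pos (proj1 (rho_01 i)) (rho_nxt_le i) (1 - x)) as Hpos.
    pose proof (mobius_lt_1 _ _ _ theta_pos (proj1 (rho_01 i)) (rho_nxt_le i) (1 - x)) as Hlt1.
    split; [apply Hpos|apply Hlt1]; lra.
Qed.

Lemma gL_nxt_eq_gR i x x' : 0 <= x <= 1 -> 0 <= x' <= 1 -> gL (nxt i) x = gR i x' ->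
  x = 0 /\ x' = 1.
Proof.
  intros Hx Hx' E. pose proof (gL_nxt_0 i).
  assert (HL : 0 < x -> gL (nxt i) x < gL (nxt i) 0) by
    (intro; exact (branch_lt false (nxt i) 0 x ltac:(lra) ltac:(lra) ltac:(lra))).
  assert (HR : x' < 1 -> gR i 1 < gR i x') by
    (intro; exact (branch_lt true i x' 1 ltac:(lra) ltac:(lra) ltac:(lra))).
  destruct (Req_dec x 0), (Req_dec x' 1); [auto|exfalso..]; subst; lra.
Qed.

Lemma branch_dist b i x x' : 0 <= x <= 1 -> 0 <= x' <= 1 ->
  Rabs (branch b i x - branch b i x') <= Rabs (x - x').
Proof.
  intros Hx Hx'. destruct (Rle_dec x x').
  - pose proof (branch_sub_le b i x x' ltac:(lra) ltac:(lra)).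
    destruct (Req_dec x x') as [->|]; [rewrite !Rminus_diag, Rabs_R0; lra|].
    pose proof (branch_lt b i x x' ltac:(lra) ltac:(lra) ltac:(lra)).
    rewrite Rabs_right, Rabs_left by lra. lra.
  - pose proof (branch_sub_le b i x' x ltac:(lra) ltac:(lra)).
    pose proof (branch_lt b i x' x ltac:(lra) ltac:(lra) ltac:(lra)).
    rewrite Rabs_left, Rabs_right by lra. lra.
Qed.

Lemma branch_between_preimage b i a a' c : 0 <= a <= 1 -> 0 <= a' <= 1 ->
  between (branch b i a) (branch b i a') c -> exists c0, between a a' c0 /\ branch b i c0 = c.
Proof. apply between_preimage; [apply branch_continuous|apply branch_lt]. Qed.

Lemma branch_open b i u eps : 0 < u < 1 -> 0 < eps ->
  exists delta, 0 < delta /\ forall v, Rabs (v - branch b i u) < delta ->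
    exists c, 0 < c < 1 /\ Rabs (c - u) < eps /\ branch b i c = v.
Proof.
  intros Hu Heps.
  assert (He : exists e, 0 < e /\ e < eps /\ e < u /\ e < 1 - u).
  { exists (Rmin eps (Rmin u (1 - u)) / 2). unfold Rmin. repeat destruct Rle_dec; lra. }
  destruct He as (e & He).
  pose proof (branch_lt b i (u - e) u ltac:(lra) ltac:(lra) ltac:(lra)).
  pose proof (branch_lt b i u (u + e) ltac:(lra) ltac:(lra) ltac:(lra)).
  exists (Rmin (branch b i (u - e) - branch b i u) (branch b i u - branch b i (u + e))).
  split; [apply Rmin_glb_lt; lra|].
  intros v Hv. apply Rabs_def2 in Hv.
  pose proof (Rmin_l (branch b i (u - e) - branch b i u) (branch b i u - branch b i (u + e))).
  pose proof (Rmin_r (branch b i (u - e) - branch b i u) (branch b i u - branch b i (u + e))).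
  destruct (branch_between_preimage b i (u - e) (u + e) v ltac:(lra) ltac:(lra))
    as (c & Hc & Ec); [right; lra|].
  exists c. split; [destruct Hc; lra|]. split; [apply Rabs_def1; destruct Hc; lra|exact Ec].
Qed.

Variable d : idx -> R.
Hypothesis d_01 : forall i, 0 < d i < 1.

Notation step := (step rho d).
Notation trajectory := (trajectory rho d).
Notation preimage := (preimage rho d).

Lemma step_iff z w : step z w <-> exists b i x, 0 <= x <= 1 /\ z = xpt x i /\
  side b (d i) x /\ w = xpt (branch b i x) (branch_edge b i).
Proof.
  split.
  - intros (i & x & Hx & -> & [[Hs ->]|[Hs ->]]).
    + exists false, i, x. rewrite f_xpt_nxt by (auto || lra). auto.
    + exists true, i, x. rewrite f_xpt_nxt2 by (auto || lra). auto.
  - intros ([] & i & x & Hx & -> & Hs & ->); exists i, x; split; auto; split; auto.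
    + right. rewrite f_xpt_nxt2 by (auto || lra). auto.
    + left. rewrite f_xpt_nxt by (auto || lra). auto.
Qed.

Lemma step_xpt b i x : 0 <= x <= 1 -> side b (d i) x ->
  step (xpt x i) (xpt (branch b i x) (branch_edge b i)).
Proof. intros. apply step_iff. exists b, i, x. auto. Qed.

Lemma step_target z w : step z w -> exists i v, 0 < v < 1 /\ w = xpt v i.
Proof.
  intros (b & i & x & Hx & _ & Hs & ->)%step_iff.
  exists (branch_edge b i), (branch b i x). split; [|reflexivity].
  exact (branch_interior b i (d i) x (d_01 i) Hx Hs).
Qed.

Lemma step_exists i x : 0 <= x <= 1 -> exists w, step (xpt x i) w.
Proof.
  intros Hx. destruct (Rle_dec x (d i)).
  - exists (xpt (branch false i x) (branch_edge false i)). now apply step_xpt.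
  - exists (xpt (branch true i x) (branch_edge true i)). apply step_xpt; simpl; lra.
Qed.

(* The only way two different branches can reach the same point is from the common
   vertex of two edges, which is one and the same point of [A^0]. *)
Lemma step_source_unique z z' w : step z w -> step z' w -> z = z'.
Proof.
  intros (b & i & x & Hx & -> & Hs & ->)%step_iff (b' & i' & x' & Hx' & -> & Hs' & E)%step_iff.
  pose proof (branch_interior b i (d i) x (d_01 i) Hx Hs) as Hv.
  pose proof (branch_interior b' i' (d i') x' (d_01 i') Hx' Hs') as Hv'.
  destruct (xpt_inj _ _ _ _ Hv (conj (Rlt_le _ _ (proj1 Hv')) (Rlt_le _ _ (proj2 Hv'))) E)
    as [Ei Ex].
  assert (Hcross : forall j y y', 0 <= y <= 1 -> 0 <= y' <= 1 ->
            gL (nxt j) y = gR j y' -> xpt y (nxt j) = xpt y' j).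
  { intros j y y' Hy Hy' Ey.
    destruct (gL_nxt_eq_gR j y y' Hy Hy' Ey) as [-> ->].
    apply xpt_0_nxt. }
  destruct b, b'; simpl in Ei, Ex.
  - apply nxt_inj, nxt_inj in Ei. subst i'. f_equal. exact (branch_inj true i x x' Hx Hx' Ex).
  - apply nxt_inj in Ei. subst i'. symmetry. apply Hcross; auto.
  - apply nxt_inj in Ei. subst i. apply Hcross; auto.
  - apply nxt_inj in Ei. subst i'. f_equal. exact (branch_inj false i x x' Hx Hx' Ex).
Qed.

(** * The backward orbit of [d_1] *)

Lemma trajectory_shift zs k : trajectory zs -> trajectory (fun n => zs (k + n)%nat).
Proof. intros H n. replace (k + S n)%nat with (S (k + n)) by lia. apply H. Qed.

Lemma trajectory_cons z zs : step z (zs O) -> trajectory zs ->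
  trajectory (fun n => match n with O => z | S m => zs m end).
Proof. intros Hz H [|n]; [exact Hz|apply H]. Qed.

Lemma trajectory_exists i x : 0 <= x <= 1 -> exists zs, trajectory zs /\ zs O = xpt x i.
Proof.
  intros Hx. set (next z := epsilon (inhabits z) (step z)).
  assert (Hon : forall n, exists j y, 0 <= y <= 1 /\ Nat.iter n next (xpt x i) = xpt y j).
  { induction n as [|n (j & y & Hy & E)]; [exists i, x; auto|].
    simpl. rewrite E. destruct (step_exists j y Hy) as [w Hw].
    destruct (step_target _ _ (epsilon_spec (inhabits (xpt y j)) _ (ex_intro _ w Hw)))
      as (j' & y' & Hy' & E').
    exists j', y'. split; [lra|exact E']. }
  exists (fun n => Nat.iter n next (xpt x i)). split; [|reflexivity].
  intro n. destruct (Hon n) as (j & y & Hy & E). simpl. rewrite E.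
  apply epsilon_spec, step_exists, Hy.
Qed.

Lemma trajectory_backward_unique zs zs' t : trajectory zs -> trajectory zs' ->
  zs t = zs' t -> zs O = zs' O.
Proof.
  intros H H'. induction t as [|t IH]; intro E; [exact E|].
  apply IH, (step_source_unique _ _ (zs (S t))); [apply H|rewrite E; apply H'].
Qed.

Definition leads_to (z u : pt) : Prop := z = u \/ preimage z u.

Lemma preimage_of_step z w u : step z w -> leads_to w u -> preimage z u.
Proof.
  intros Hzw Hw.
  assert (Hfrom_w : exists zs t, trajectory zs /\ zs O = w /\ zs t = u).
  { destruct Hw as [<-|(zs & H & E & t & _ & Et)]; [|eauto].
    destruct (step_target _ _ Hzw) as (i & v & Hv & ->).
    destruct (trajectory_exists i v ltac:(lra)) as (zs & H & E). exists zs, O. auto. }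
  destruct Hfrom_w as (zs & t & H & E & Et).
  exists (fun n => match n with O => z | S m => zs m end).
  split; [apply trajectory_cons; [rewrite E|]; assumption|].
  split; [reflexivity|]. exists (S t). split; [lia|exact Et].
Qed.

Definition reaches (t : nat) (z : pt) : Prop :=
  exists zs, trajectory zs /\ zs O = z /\ zs t = dpt d i1.

Lemma reaches_unique t z z' : reaches t z -> reaches t z' -> z = z'.
Proof.
  intros (zs & H & <- & E) (zs' & H' & <- & E').
  apply (trajectory_backward_unique zs zs' t H H'). congruence.
Qed.

Lemma reaches_shift t k z : reaches (k + t) z -> exists w, reaches t w.
Proof.
  intros (zs & H & _ & E). exists (zs k), (fun n => zs (k + n)%nat).
  split; [apply trajectory_shift, H|]. rewrite Nat.add_0_r. auto.
Qed.

Hypothesis d1_infinite : infinite_set (fun z => preimage z (dpt d i1)).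
Hypothesis d2_finite : finite_set (fun z => preimage z (dpt d i2)).
Hypothesis d3_finite : finite_set (fun z => preimage z (dpt d i3)).

Lemma reaches_exists t : exists z, reaches t z.
Proof.
  apply NNPP. intro Hnone. apply d1_infinite.
  exists (map (fun s => epsilon (inhabits (dpt d i1)) (reaches s)) (seq 0 t)).
  intros z (zs & H & E & s & Hs & Es).
  assert (Hz : reaches s z) by (exists zs; auto).
  destruct (Nat.lt_ge_cases s t) as [Hst|Hts].
  - apply in_map_iff. exists s. split; [|apply in_seq; lia].
    apply (reaches_unique s); [apply epsilon_spec; eauto|exact Hz].
  - exfalso. apply Hnone, (reaches_shift t (s - t) z).
    replace (s - t + t)%nat with s by lia. exact Hz.
Qed.

Definition orbit (t : nat) : pt := epsilon (inhabits (dpt d i1)) (reaches t).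

Lemma orbit_reaches t : reaches t (orbit t).
Proof. unfold orbit. apply epsilon_spec, reaches_exists. Qed.

Lemma orbit_0 : orbit O = dpt d i1.
Proof. destruct (orbit_reaches O) as (zs & _ & <- & E). exact E. Qed.

Lemma orbit_step t : step (orbit (S t)) (orbit t).
Proof.
  destruct (orbit_reaches (S t)) as (zs & H & E & Et).
  assert (Hr : reaches t (zs 1%nat)) by (exists (fun n => zs (1 + n)%nat);
    split; [apply trajectory_shift, H|auto]).
  rewrite <- (reaches_unique t _ _ Hr (orbit_reaches t)), <- E. apply H.
Qed.

Lemma orbit_preimage t k : (1 <= k)%nat -> preimage (orbit (k + t)) (orbit t).
Proof.
  intros Hk. destruct (orbit_reaches (k + t)) as (zs & H & E & Et).
  exists zs. split; [exact H|]. split; [exact E|]. exists k. split; [exact Hk|].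
  apply (reaches_unique t); [|apply orbit_reaches].
  exists (fun n => zs (k + n)%nat). split; [apply trajectory_shift, H|]. rewrite Nat.add_0_r. auto.
Qed.

Lemma preimage_d1_orbit z : preimage z (dpt d i1) -> exists t, z = orbit t.
Proof.
  intros (zs & H & E & t & _ & Et). exists t.
  apply (reaches_unique t); [exists zs; auto|apply orbit_reaches].
Qed.

Lemma orbit_inj a b : orbit a = orbit b -> a = b.
Proof.
  (* if the orbit repeats, it is periodic and d_1 has only finitely many pre-images *)
  assert (Hlt : forall a b, (a < b)%nat -> orbit a <> orbit b).
  { clear a b. intros a b Hab E. apply d1_infinite. exists (map orbit (seq 0 b)).
    assert (Hper : forall k, orbit (a + k) = orbit (b + k)).
    { induction k as [|k IH]; [rewrite !Nat.add_0_r; exact E|].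
      rewrite <- !plus_n_Sm. apply (step_source_unique _ _ (orbit (a + k))).
      - apply orbit_step.
      - rewrite IH. apply orbit_step. }
    assert (Hbelow : forall t, exists s, (s < b)%nat /\ orbit t = orbit s).
    { intro t. induction t as [t IH] using (well_founded_induction Wf_nat.lt_wf).
      destruct (Nat.lt_ge_cases t b) as [Htb|Hbt]; [exists t; auto|].
      destruct (IH (a + (t - b))%nat ltac:(lia)) as (s & Hs & Es). exists s. split; [exact Hs|].
      rewrite <- Es, Hper. f_equal. lia. }
    intros z (t & ->)%preimage_d1_orbit. destruct (Hbelow t) as (s & Hs & ->).
    apply in_map_iff. exists s. split; [reflexivity|apply in_seq; lia]. }
  intros E. destruct (Nat.lt_total a b) as [H|[H|H]]; [exfalso; eapply Hlt; eauto|exact H|].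
  exfalso. eapply Hlt; eauto.
Qed.

Lemma P1_orbit z : P1 rho d z <-> exists t, z = orbit t.
Proof.
  split.
  - intros [->|Hz]; [exists O; symmetry; apply orbit_0|apply preimage_d1_orbit, Hz].
  - intros [[|t] ->]; [left; apply orbit_0|right].
    rewrite <- orbit_0. replace (S t) with (S t + 0)%nat by lia. apply orbit_preimage. lia.
Qed.

Definition leads_to_d23 (z : pt) : Prop := leads_to z (dpt d i2) \/ leads_to z (dpt d i3).

Lemma leads_to_d23_finite : finite_set leads_to_d23.
Proof.
  destruct d2_finite as [l2 H2], d3_finite as [l3 H3].
  exists (dpt d i2 :: dpt d i3 :: l2 ++ l3).
  intros z [[<-|Hz]|[<-|Hz]]; simpl; rewrite ?in_app_iff; auto.
Qed.

Lemma leads_to_d23_step z w : step z w -> leads_to_d23 w -> leads_to_d23 z.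
Proof. intros Hzw [Hw|Hw]; [left|right]; right; exact (preimage_of_step z w _ Hzw Hw). Qed.

Lemma orbit_not_leads_to_d23 t : ~ leads_to_d23 (orbit t).
Proof.
  intros Ht. destruct leads_to_d23_finite as [l Hl].
  assert (Hall : forall k, In (orbit (k + t)) l).
  { intro k. apply Hl. induction k as [|k IH]; [exact Ht|].
    exact (leads_to_d23_step _ _ (orbit_step (k + t)) IH). }
  destruct (pigeonhole (fun k => orbit (k + t)) l Hall) as (a & b & Hab & E).
  apply orbit_inj in E. lia.
Qed.

Lemma orbit_on_edge t : exists i x, 0 < x < 1 /\ orbit t = xpt x i.
Proof. apply (step_target (orbit (S t))), orbit_step. Qed.

Definition coords (t : nat) : idx * R :=
  epsilon (inhabits (i1, 0)) (fun p => 0 < snd p < 1 /\ orbit t = xpt (snd p) (fst p)).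
Definition edge (t : nat) : idx := fst (coords t).
Definition pos (t : nat) : R := snd (coords t).

Lemma orbit_coords t : 0 < pos t < 1 /\ orbit t = xpt (pos t) (edge t).
Proof.
  destruct (orbit_on_edge t) as (i & x & Hx & E).
  exact (epsilon_spec (inhabits (i1, 0)) (fun p => 0 < snd p < 1 /\ orbit t = xpt (snd p) (fst p))
    (ex_intro _ (i, x) (conj Hx E))).
Qed.

Lemma coords_eq t i x : 0 <= x <= 1 -> orbit t = xpt x i -> edge t = i /\ pos t = x.
Proof.
  intros Hx E. destruct (orbit_coords t) as [Hp Et]. rewrite Et in E. exact (xpt_inj _ _ _ _ Hp Hx E).
Qed.

Lemma coords_0 : edge O = i1 /\ pos O = d i1.
Proof. apply coords_eq; [pose proof (d_01 i1); lra|apply orbit_0]. Qed.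

Lemma coords_inj a b : edge a = edge b -> pos a = pos b -> a = b.
Proof.
  intros Ee Ep. apply orbit_inj. rewrite (proj2 (orbit_coords a)), (proj2 (orbit_coords b)).
  congruence.
Qed.

Lemma pos_ne_decision t : pos (S t) <> d (edge (S t)).
Proof.
  intro E. destruct (orbit_coords (S t)) as [_ Et]. rewrite E in Et.
  destruct (edge (S t)) eqn:Ee.
  - assert (E0 : orbit (S t) = orbit O) by (rewrite orbit_0; exact Et).
    apply orbit_inj in E0. discriminate.
  - apply (orbit_not_leads_to_d23 (S t)). left. left. exact Et.
  - apply (orbit_not_leads_to_d23 (S t)). right. left. exact Et.
Qed.

Lemma orbit_branch t : exists b, side b (d (edge (S t))) (pos (S t)) /\
  edge t = branch_edge b (edge (S t)) /\ pos t = branch b (edge (S t)) (pos (S t)).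
Proof.
  destruct (proj1 (step_iff _ _) (orbit_step t)) as (b & i & x & Hx & Es & Hs & Et).
  destruct (coords_eq (S t) i x Hx Es) as [-> ->].
  pose proof (branch_interior b i _ _ (d_01 i) Hx Hs) as Hv.
  assert (Hv' : 0 <= branch b i x <= 1) by lra.
  destruct (coords_eq t _ _ Hv' Et) as [-> ->]. eauto.
Qed.

(** * No point of the orbit is isolated *)

Definition clean_pair (m n : nat) : Prop :=
  edge m = edge n /\ forall c, between (pos m) (pos n) c -> ~ leads_to_d23 (xpt c (edge m)).

Lemma clean_pair_sym m n : clean_pair m n -> clean_pair n m.
Proof.
  intros [E H]. split; [symmetry; exact E|]. rewrite <- E. intros c Hc. apply H, between_sym, Hc.
Qed.

Lemma side_between b c x x' y : side b c x -> side b c x' -> between x x' y -> side b c y.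
Proof. destruct b; simpl; intros ? ? [?|?]; lra. Qed.

Lemma side_near b c x y : side b c x -> x <> c -> Rabs (y - x) < Rabs (x - c) -> side b c y.
Proof.
  intros Hx Hxc Hy. destruct (Rabs_def2 _ _ Hy).
  destruct b; simpl in *; [rewrite Rabs_right in * by lra|rewrite Rabs_left in * by lra]; lra.
Qed.

Lemma side_opposite b c x x' : side b c x -> side (negb b) c x' -> x <> c -> x' <> c ->
  between x x' c.
Proof. unfold between; destruct b; simpl; intros; lra. Qed.

(* [d_2] and [d_3] lead to themselves, so a clean pair can only straddle [d_1]. *)
Lemma clean_pair_step m n : clean_pair (S m) (S n) ->
  (exists t, (1 <= t)%nat /\ edge t = i1 /\
     Rabs (pos t - d i1) <= Rabs (pos (S m) - pos (S n))) \/
  (clean_pair m n /\ Rabs (pos m - pos n) <= Rabs (pos (S m) - pos (S n))).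
Proof.
  intros [Ee Hclean].
  destruct (orbit_branch m) as (b & Hs & Hem & Hpm), (orbit_branch n) as (b' & Hs' & Hen & Hpn).
  rewrite <- Ee in Hs', Hen, Hpn.
  destruct (orbit_coords (S m)) as [Hm _], (orbit_coords (S n)) as [Hn _].
  destruct (Bool.bool_dec b b') as [<-|Hbb'].
  - right. split; [split; [congruence|]|].
    + intros c Hbet Hlead. rewrite Hpm, Hpn in Hbet.
      destruct (branch_between_preimage b (edge (S m)) (pos (S m)) (pos (S n)) c
        ltac:(lra) ltac:(lra) Hbet) as (c0 & Hc0 & Ec0).
      apply (Hclean c0 Hc0), (leads_to_d23_step _ (xpt c (edge m))); [|exact Hlead].
      rewrite Hem, <- Ec0. apply step_xpt; [destruct Hc0; lra|].
      exact (side_between b _ _ _ _ Hs Hs' Hc0).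
    + rewrite Hpm, Hpn. apply branch_dist; lra.
  - assert (Hd : between (pos (S m)) (pos (S n)) (d (edge (S m)))).
    { apply (side_opposite b); [exact Hs| |apply pos_ne_decision|rewrite Ee; apply pos_ne_decision].
      destruct b, b'; simpl in *; congruence. }
    destruct (edge (S m)) eqn:Eedge.
    + left. exists (S m). split; [lia|]. split; [exact Eedge|].
      apply between_dist in Hd. rewrite Rabs_minus_sym in Hd |- *. lra.
    + exfalso. apply (Hclean _ Hd). left. left. reflexivity.
    + exfalso. apply (Hclean _ Hd). right. left. reflexivity.
Qed.

Lemma clean_pair_forward s m n : clean_pair (s + m) (s + n) ->
  (exists t, (1 <= t)%nat /\ edge t = i1 /\
     Rabs (pos t - d i1) <= Rabs (pos (s + m) - pos (s + n))) \/
  (clean_pair m n /\ Rabs (pos m - pos n) <= Rabs (pos (s + m) - pos (s + n))).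
Proof.
  induction s as [|s IH]; intros Hc; [right; split; [exact Hc|simpl; lra]|].
  destruct (clean_pair_step (s + m) (s + n) Hc) as [(t & Ht)|[Hc' Hd]]; [left; eauto|].
  destruct (IH Hc') as [(t & Ht1 & Ht2 & Ht3)|[Hmn Hd']].
  - left. exists t. repeat split; auto. simpl. lra.
  - right. split; [exact Hmn|]. simpl. lra.
Qed.

Lemma clean_pair_exists eps : 0 < eps ->
  exists a b, (a < b)%nat /\ clean_pair a b /\ Rabs (pos a - pos b) < eps.
Proof.
  intros Heps. destruct leads_to_d23_finite as [l Hl].
  set (B := flat_map (fun z => map z (i1 :: i2 :: i3 :: nil)) l).
  destruct (close_pair_avoiding edge (i1 :: i2 :: i3 :: nil) pos B eps Heps)
    as (a & b & Hab & Ee & Hd & Hfree).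
  - intro t. destruct (edge t); simpl; auto.
  - intro t. destruct (orbit_coords t). lra.
  - exact coords_inj.
  - assert (Hcl : clean_pair a b).
    { split; [exact Ee|]. intros c Hc Hlead. apply (Hfree c); [|exact Hc].
      apply in_flat_map. exists (xpt c (edge a)). split; [apply Hl, Hlead|].
      apply in_map_iff. exists (nxt (nxt (edge a))). split; [apply xpt_at_nxt2|].
      destruct (edge a); simpl; auto. }
    destruct (Nat.lt_total a b) as [Hlt|[Heq|Hlt]]; [|contradiction|].
    + exists a, b. auto.
    + exists b, a. rewrite Rabs_minus_sym. auto using clean_pair_sym.
Qed.

Lemma orbit_near_d1 eps : 0 < eps ->
  exists t, (1 <= t)%nat /\ edge t = i1 /\ Rabs (pos t - d i1) < eps.
Proof.
  intros Heps. destruct (clean_pair_exists eps Heps) as (a & b & Hab & Hcl & Hd).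
  pose proof (clean_pair_forward a 0 (b - a)) as Hforward.
  rewrite Nat.add_0_r in Hforward. replace (a + (b - a))%nat with b in Hforward by lia.
  destruct (Hforward Hcl) as [(t & Ht1 & Ht2 & Ht3)|[[Ee _] Hd']].
  - exists t. split; [|split]; auto. lra.
  - destruct coords_0 as [E0 P0]. exists (b - a)%nat. split; [lia|]. split; [congruence|].
    rewrite Rabs_minus_sym, <- P0. lra.
Qed.

Lemma orbit_not_isolated k eps : 0 < eps ->
  exists t, t <> k /\ edge t = edge k /\ Rabs (pos t - pos k) < eps.
Proof.
  revert eps. induction k as [|k IH]; intros eps Heps.
  - destruct (orbit_near_d1 eps Heps) as (t & Ht & Et & Pt). destruct coords_0 as [E0 P0].
    exists t. split; [lia|]. rewrite E0, P0. auto.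
  - destruct (orbit_branch k) as (b & Hs & Ek & Pk).
    set (tau := edge (S k)) in *. set (u := pos (S k)) in *.
    pose proof (pos_ne_decision k) as Hud. fold tau u in Hud.
    destruct (orbit_coords (S k)) as [Hu _].
    pose proof (Rmin_l eps (Rabs (u - d tau))). pose proof (Rmin_r eps (Rabs (u - d tau))).
    assert (Heps' : 0 < Rmin eps (Rabs (u - d tau)))
      by (apply Rmin_glb_lt; [lra|apply Rabs_pos_lt; lra]).
    destruct (branch_open b tau u _ Hu Heps') as (delta & Hdelta & Hopen).
    destruct (IH delta Hdelta) as (t & Htk & Et & Pt).
    rewrite Pk in Pt. destruct (Hopen (pos t) Pt) as (c & Hc & Hcu & Ec).
    assert (Hside : side b (d tau) c) by (apply (side_near b _ u); [exact Hs|exact Hud|lra]).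
    assert (Hstep : step (xpt c tau) (orbit t)).
    { rewrite (proj2 (orbit_coords t)), Et, Ek, <- Ec. apply step_xpt; [lra|exact Hside]. }
    pose proof (step_source_unique _ _ _ (orbit_step t) Hstep) as Es.
    destruct (coords_eq (S t) tau c ltac:(lra) Es) as [E1 E2].
    exists (S t). split; [congruence|]. split; [exact E1|].
    rewrite E2. lra.
Qed.

Lemma P1_no_isolated z : P1 rho d z ->
  forall eps, 0 < eps -> exists p, P1 rho d p /\ p <> z /\ dist3 z p < eps.
Proof.
  intros [k ->]%P1_orbit eps Heps.
  destruct (orbit_not_isolated k (eps / 2) ltac:(lra)) as (t & Htk & Et & Pt).
  exists (orbit t). split; [apply P1_orbit; eauto|]. split; [intro E; apply Htk, orbit_inj, E|].
  rewrite (proj2 (orbit_coords k)), (proj2 (orbit_coords t)), Et.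
  pose proof (dist3_xpt (pos k) (pos t) (edge k)). rewrite Rabs_minus_sym in Pt. lra.
Qed.

Lemma P1_sub_A0 z : P1 rho d z -> inA0 z.
Proof.
  intros [k ->]%P1_orbit. destruct (orbit_coords k) as [Hp ->]. apply xpt_inA0. lra.
Qed.

Lemma closure_P1_perfect : perfectA0 (closureA0 (P1 rho d)).
Proof.
  split; [apply closureA0_closed|].
  exact (closureA0_no_isolated _ P1_sub_A0 P1_no_isolated).
Qed.

Lemma P1_enumerable : exists e : nat -> pt, forall z, P1 rho d z -> exists k, z = e k.
Proof. exists orbit. intros z. apply P1_orbit. Qed.

End Dynamics.

Theorem corollary5p1 (rho d : idx -> R) :
  (forall i, 0 < rho i < 1) ->
  rho i1 + rho i2 + rho i3 > 1 ->
  rho i1 + rho i2 <= 1 -> rho i2 + rho i3 <= 1 -> rho i1 + rho i3 <= 1 ->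
  (forall i, 0 < d i < 1) ->
  infinite_set (fun z => preimage rho d z (dpt d i1)) ->
  finite_set (fun z => preimage rho d z (dpt d i2)) ->
  finite_set (fun z => preimage rho d z (dpt d i3)) ->
  perfectA0 (closureA0 (P1 rho d)) /\
  uncountable_set (closureA0 (P1 rho d)) /\
  uncountable_set (fun z => closureA0 (P1 rho d) z /\ ~ P1 rho d z).
Proof.
  intros Hrho Hsum H12 H23 H13 Hd Hinf Hfin2 Hfin3.
  assert (Hperfect : perfectA0 (closureA0 (P1 rho d)))
    by (eapply closure_P1_perfect; eassumption).
  assert (Hd1 : closureA0 (P1 rho d) (dpt d i1)).
  { apply closureA0_incl; [apply xpt_inA0; specialize (Hd i1); lra|left; reflexivity]. }
  assert (Huncountable : uncountable_set (closureA0 (P1 rho d))).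
  { apply perfect_uncountable; [apply Hperfect|intros z []; assumption|apply Hperfect|eauto]. }
  split; [exact Hperfect|]. split; [exact Huncountable|].
  apply (uncountable_setminus _ (P1 rho d) Huncountable).
  eapply P1_enumerable; eassumption.
Qed.
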